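(* Let $\Bbbk$ be a field and $q\in\Bbbk$ with $[m]_q:=1+q+\cdots+q^{m-1}\ne0$ for all $m\ge1$, and $[m]_q!=[1]_q\cdots[m]_q$. Then for all $k\ge1$, $$\det \begin{pmatrix} 1&\frac{t}{[1]_q!}&\frac{t^2}{[2]_q!}&\ldots &\frac{t^k}{[k]_q!}\\ 1&\frac{1}{[1]_q!}&\frac{1}{[2]_q!}&\ldots &\frac{1}{[k]_q!}\\ 0&1&\frac{1}{[1]_q!}&\ldots &\frac{1}{[k-1]_q!}\\ \vdots&\vdots&\ddots&\ddots&\vdots \\ 0&0&\ldots &1&\frac{1}{[1]_q!} \end{pmatrix} =\frac{(1-t)(q-t)\cdots (q^{k-1}-t)}{[k]_q!}.$$
   Context: The matrix is $(k+1)\times(k+1)$; row $r\ge3$ has zeros in its first $r-2$ entries, $1$ in entry $r-1$, followed by $1/[1]_q!,1/[2]_q!,\dots$. *)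

From mathcomp Require Import all_boot all_order all_algebra.
Set Implicit Arguments. Unset Strict Implicit. Unset Printing Implicit Defensive.
Import GRing.Theory.
Local Open Scope ring_scope.

Definition qint (F : fieldType) (q : F) (m : nat) : F := \sum_(i < m) q ^+ i.

Definition qfact (F : fieldType) (q : F) (m : nat) : F :=
  \prod_(1 <= i < m.+1) qint q i.

(* The (k+1)x(k+1) matrix of the statement (0-based indices):
   row 0 : t^j / [j]_q!
   row i >= 1 : entry j is 1/[j-(i-1)]_q! if i-1 <= j, else 0
   (so row 1 is 1/[j]_q!, and row i >= 2 has zeros then 1 at column i-1). *)
Definition qmat (F : fieldType) (q t : F) (k : nat) : 'M[F]_(k.+1) :=
  \matrix_(i < k.+1, j < k.+1)
    if i == 0%N :> nat then t ^+ j / qfact q j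
    else if (i.-1 <= j)%N then (qfact q (j - i.-1))^-1 else 0.

From mathcomp Require Import all_boot all_order all_algebra.
From mathcomp Require Import ring.
Set Implicit Arguments. Unset Strict Implicit. Unset Printing Implicit Defensive.
Import GRing.Theory.
Local Open Scope ring_scope.

(* Expanding along the first column, which is (v 0, 1, 0, ..., 0), gives
   det = sum_j (-1)^j t^j/[j]_q! * D_(k-j), where D_n is the determinant of the
   n x n Toeplitz block (1/[j-i+1]_q!).  The Gauss q-binomial identity
     sum_j x^j q^((k-j)(k-j-1)/2) / ([j]_q! [k-j]_q!) = prod_(i<k) (q^i + x) / [k]_q!
   taken at x = -1 (where the product vanishes) is exactly the recursion that
   identifies D_n with q^(n(n-1)/2) / [n]_q!; taken at x = -t it then sums the
   expansion. *)

Section QDeterminant.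

Variables (F : fieldType) (q : F).

Lemma qfact0 : qfact q 0 = 1.
Proof. by rewrite /qfact big_geq. Qed.

Lemma qfactS m : qfact q m.+1 = qfact q m * qint q m.+1.
Proof. by rewrite /qfact big_nat_recr. Qed.

Lemma qint0 : qint q 0 = 0.
Proof. by rewrite /qint big_ord0. Qed.

Lemma qintD a b : qint q (a + b) = qint q a + q ^+ a * qint q b.
Proof.
rewrite /qint big_split_ord mulr_sumr; congr (_ + _).
by apply: eq_bigr => i _; rewrite exprD.
Qed.

Definition qtri (n : nat) : F := \prod_(i < n) q ^+ i.

Definition gauss_sum (x : F) (k : nat) : F :=
  \sum_(j < k.+1) x ^+ j * qtri (k - j) / (qfact q j * qfact q (k - j)).

Definition qmatv (v : nat -> F) (k : nat) : 'M[F]_(k.+1) :=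
  \matrix_(i < k.+1, j < k.+1)
    if i == 0%N :> nat then v j
    else if (i.-1 <= j)%N then (qfact q (j - i.-1))^-1 else 0.

(* With top row (1/[j+1]_q!)_j, qmatv is the n x n Toeplitz block D_n. *)
Definition qtail_det (n : nat) : F :=
  if n is k.+1 then \det (qmatv (fun j => (qfact q j.+1)^-1) k) else 1.

Lemma det_qmatvS v k :
  \det (qmatv v k.+1) = v 0%N * qtail_det k.+1 - \det (qmatv (v \o succn) k).
Proof.
rewrite (expand_det_col _ ord0) !big_ord_recl big1 => [|i _]; last first.
  by rewrite mxE mul0r.
rewrite addr0 /cofactor !mxE /= qfact0 invr1 expr0 expr1 mul1r mulN1r mul1r.
rewrite /qtail_det; congr (_ * _ - _); congr (\det _);
  by apply/matrixP => -[[|i] Hi] j; rewrite !mxE.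
Qed.

Lemma det_qmatv v k :
  \det (qmatv v k) = \sum_(j < k.+1) (-1) ^+ j * v j * qtail_det (k - j).
Proof.
elim: k v => [|k IH] v.
  by rewrite [qmatv v 0]mx11_scalar det_scalar1 mxE big_ord1 /= mul1r mulr1.
rewrite det_qmatvS IH [RHS]big_ord_recl /= expr0 mul1r; congr (_ + _).
rewrite -sumrN; apply: eq_bigr => j _.
by rewrite /bump /= add1n subSS exprS mulN1r !mulNr.
Qed.

Hypothesis qint_neq0 : forall m : nat, (1 <= m)%N -> qint q m != 0.

Lemma qfact_neq0 m : qfact q m != 0.
Proof.
elim: m => [|m IH]; first by rewrite qfact0 oner_neq0.
by rewrite qfactS mulf_neq0 // qint_neq0.
Qed.

Lemma gauss_sumS x k :
  qint q k.+1 * gauss_sum x k.+1 = (q ^+ k + x) * gauss_sum x k.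
Proof.
have nf := qfact_neq0.
have qpascal (j : 'I_k.+2) : qint q k.+1 = q ^+ j * qint q (k.+1 - j) + qint q j.
  by rewrite addrC -qintD subnKC // -ltnS ltn_ord.
rewrite /gauss_sum mulr_sumr.
under eq_bigr => j _ do rewrite (qpascal j) mulrDl.
rewrite big_split /= mulrDl !mulr_sumr; congr (_ + _).
  rewrite big_ord_recr /= subnn qint0 mulr0 mul0r addr0.
  apply: eq_bigr => j _ /=.
  have le_jk : (j <= k)%N by rewrite -ltnS ltn_ord.
  rewrite subSn // /qtri big_ord_recr /= qfactS.
  have qint_ne0 := qint_neq0 (isT : (0 < (k - j).+1)%N).
  have -> : q ^+ k = q ^+ j * q ^+ (k - j) by rewrite -exprD subnKC.
  by field; rewrite !nf.
rewrite big_ord_recl /= qint0 !mul0r add0r.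
apply: eq_bigr => j _; rewrite /bump /= add1n subSS qfactS exprS.
have qint_ne0 := qint_neq0 (isT : (0 < j.+1)%N).
by field; rewrite !nf.
Qed.

Lemma gauss_binomial x k :
  gauss_sum x k = (\prod_(i < k) (q ^+ i + x)) / qfact q k.
Proof.
elim: k => [|k IH].
  by rewrite /gauss_sum /qtri big_ord1 !big_ord0 /= qfact0 expr0 !mul1r invr1.
have qk := qint_neq0 (isT : (0 < k.+1)%N).
apply: (mulfI qk); rewrite gauss_sumS IH big_ord_recr /= qfactS.
by field; rewrite qfact_neq0 qk.
Qed.

Lemma qtail_det_closed n : qtail_det n = qtri n / qfact q n.
Proof.
elim/ltn_ind: n => [[|k]] IH.
  by rewrite /= /qtri big_ord0 qfact0 invr1 mulr1.
have := gauss_binomial (-1) k.+1.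
rewrite big_ord_recl /= expr0 addrN !mul0r /gauss_sum big_ord_recl /=.
rewrite expr0 mul1r subn0 qfact0 mul1r => /eqP; rewrite addr_eq0 => /eqP top.
rewrite /= det_qmatv top -sumrN; apply: eq_bigr => j _.
rewrite IH ?ltnS ?leq_subr // /bump /= add1n subSS exprS.
by field; rewrite !qfact_neq0.
Qed.

End QDeterminant.

Theorem corollary2p5 (F : fieldType) (q : F)
  (hq : forall m : nat, (1 <= m)%N -> qint q m != 0)
  (k : nat) (hk : (1 <= k)%N) (t : F) :
  \det (qmat q t k) = (\prod_(i < k) (q ^+ i - t)) / qfact q k.
Proof.
have -> : qmat q t k = qmatv q (fun j => t ^+ j / qfact q j) k.
  by apply/matrixP => i j; rewrite !mxE.
rewrite det_qmatv -gauss_binomial //; apply: eq_bigr => j _.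
rewrite qtail_det_closed // [(- t) ^+ _]exprNn.
by field; rewrite !qfact_neq0.
Qed.
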